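(* Let $N\ge1$ and $n\ge N$ be integers and let $P(t_1,\dots,t_n)$ be a symmetric polynomial with complex coefficients such that $P(x,\dots,x,t_1,\dots,t_{n-N-1})=0$ identically, where $x$ is repeated $N+1$ times. Then the polynomial $P(x,\dots,x,t_1,\dots,t_{n-N})$ (with $x$ repeated $N$ times) is divisible by $\prod_{j=1}^{n-N}(t_j-x)^2$. *)

From HB Require Import structures.
From mathcomp Require Import all_boot all_algebra.
From mathcomp Require Import Rstruct complex mpoly.
From Stdlib Require Rdefinitions.

Set Implicit Arguments.
Unset Strict Implicit.
Unset Printing Implicit Defensive.

Import GRing.Theory.
Local Open Scope ring_scope.

Definition Cplx : idomainType := complex Rdefinitions.R.

(* diag_subst n N k : the substitution of the n variables of a polynomial
   t_0..t_{n-1} into the polynomial ring in k+1 variables X_0, X_1..X_k,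
   sending the first N variables to X_0 (the repeated variable "x") and the
   variable t_i (i >= N) to X_{i-N+1}.  Used with k = n - N, i.e.
   P(x,...,x,t_1,...,t_{n-N}) with x repeated N times, x = 'X_0, t_j = 'X_j. *)
Definition diag_subst (n N k : nat) : n.-tuple {mpoly Cplx[k.+1]} :=
  [tuple (if (i < N)%N then 'X_0 else 'X_(inord (i - N).+1)) | i < n].

From HB Require Import structures.
From mathcomp Require Import all_boot all_algebra.
From mathcomp Require Import Rstruct complex mpoly.
From Stdlib Require Rdefinitions.
From mathcomp Require Import fingroup perm zify.
Set Implicit Arguments.
Unset Strict Implicit.
Unset Printing Implicit Defensive.

Import GRing.Theory Num.Theory.
Local Open Scope ring_scope.

(* Put t_j = x + y_j.  Then G(x, y) := P(x,...,x, x + y_1, ..., x + y_{n-N})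
   vanishes at y_j = 0, since N+1 arguments of P then coincide, and so does
   dG/dy_j = (d_{N+j} P)(...): differentiating P(..., z, ..., z, ...) = 0 in
   the repeated variable z gives (N+1) (d_{N+j} P) = 0 by symmetry, and the
   characteristic is 0.  Hence y_j^2 divides G for every j, and substituting
   back y_j = t_j - x gives the claim. *)

Section MPolyComp.
Variable R : comNzRingType.

Lemma mpoly_ind n (Phi : {mpoly R[n]} -> Prop) :
  Phi 0 -> Phi 1 -> (forall i, Phi 'X_i) ->
  (forall p q, Phi p -> Phi q -> Phi (p + q)) ->
  (forall p q, Phi p -> Phi q -> Phi (p * q)) ->
  (forall c p, Phi p -> Phi (c *: p)) -> forall p, Phi p.
Proof.
move=> P0 P1 PX PD PM PZ p.
have PXm m : Phi 'X_[m].
  rewrite mpolyXE_id; apply: (big_ind Phi) => // i _.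
  by elim: (m i) => [|e ih]; rewrite ?expr0 // exprS; apply: PM.
by rewrite [p]mpolyE; apply: (big_ind Phi) => // m _; apply: PZ.
Qed.

Lemma comp_mpolyA n k l (p : {mpoly R[n]}) (T : n.-tuple {mpoly R[k]})
    (U : k.-tuple {mpoly R[l]}) :
  (p \mPo T) \mPo U = p \mPo [tuple tnth T i \mPo U | i < n].
Proof.
elim/mpoly_ind: p => [|||p q hp hq|p q hp hq|c p hp].
- by rewrite !comp_mpoly0.
- by rewrite !comp_mpoly1.
- by move=> i; rewrite !comp_mpolyXU -!tnth_nth tnth_mktuple.
- by rewrite !comp_mpolyD hp hq.
- by rewrite !rmorphM /= hp hq.
- by rewrite !comp_mpolyZ hp.
Qed.

Lemma eq_comp_mpoly n k (p : {mpoly R[n]}) (T T' : n.-tuple {mpoly R[k]}) :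
  (forall i, tnth T i = tnth T' i) -> p \mPo T = p \mPo T'.
Proof. by move=> eqTT'; congr (_ \mPo _); apply: eq_from_tnth. Qed.

Lemma mderivXU n (i j : 'I_n) : ('X_i : {mpoly R[n]})^`M(j) = (i == j)%:R.
Proof.
rewrite mderivX mnm1E; case: eqP => [->|_]; last by rewrite scale0r.
by rewrite -{1}[U_(j)%MM]add0m addmK mpolyX0 scale1r.
Qed.

Lemma mderiv_comp_mpoly n k (p : {mpoly R[n]}) (T : n.-tuple {mpoly R[k]})
    (j : 'I_k) :
  (p \mPo T)^`M(j) = \sum_(i < n) (p^`M(i) \mPo T) * (tnth T i)^`M(j).
Proof.
elim/mpoly_ind: p => [|||p q hp hq|p q hp hq|c p hp].
- by rewrite comp_mpoly0 mderiv0 big1 // => i _; rewrite mderiv0 comp_mpoly0 mul0r.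
- rewrite comp_mpoly1 -mpolyC1 mderivC big1 // => i _.
  by rewrite mderivC comp_mpoly0 mul0r.
- move=> i; rewrite comp_mpolyXU -tnth_nth (bigD1 i) //= big1 => [|l ne_li].
    by rewrite mderivXU eqxx comp_mpoly1 mul1r addr0.
  by rewrite mderivXU eq_sym (negbTE ne_li) comp_mpoly0 mul0r.
- rewrite comp_mpolyD mderivD hp hq -big_split /=.
  by apply: eq_bigr => i _; rewrite mderivD comp_mpolyD mulrDl.
- rewrite rmorphM /= mderivM hp hq mulr_suml mulr_sumr -big_split /=.
  apply: eq_bigr => i _; rewrite mderivM comp_mpolyD !rmorphM /= mulrDl.
  by congr (_ + _); rewrite -!mulrA; congr (_ * _); rewrite mulrC.
- rewrite comp_mpolyZ mderivZ hp scaler_sumr.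
  by apply: eq_bigr => i _; rewrite mderivZ comp_mpolyZ scalerAl.
Qed.

Lemma sym_comp_mpoly_perm n k (p : {mpoly R[n]}) (s : 'S_n)
    (T : n.-tuple {mpoly R[k]}) :
  p \is symmetric -> p \mPo T = p \mPo [tuple tnth T (s i) | i < n].
Proof. by move=> /issymP psym; rewrite -msym_mPo psym. Qed.

Lemma sym_mderiv_comp_mpoly n k (p : {mpoly R[n]}) (T : n.-tuple {mpoly R[k]})
    (a b : 'I_n) :
  p \is symmetric -> tnth T a = tnth T b -> p^`M(a) \mPo T = p^`M(b) \mPo T.
Proof.
move=> psym eqTab; pose s := tperm a b.
have ps : p = p \mPo [tuple 'X_(s i) | i < n].
  rewrite -{1}(comp_mpoly_id p) (sym_comp_mpoly_perm s) //.
  by apply: eq_comp_mpoly => i; rewrite !tnth_mktuple.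
rewrite {1}ps mderiv_comp_mpoly (bigD1 b) //= big1 ?addr0 => [|i ne_ib]; last first.
  by rewrite tnth_mktuple mderivXU -[a in _ == a](tpermR a b) (inj_eq perm_inj) (negbTE ne_ib) mulr0.
rewrite tnth_mktuple mderivXU /s tpermR eqxx mulr1 comp_mpolyA.
apply: eq_comp_mpoly => i; rewrite !tnth_mktuple comp_mpolyXU -tnth_nth.
by case: tpermP => [->|->|].
Qed.


Definition subst0 k (J : 'I_k) : k.-tuple {mpoly R[k]} :=
  [tuple if i == J then 0 else 'X_i | i < k].

Lemma mcoeff_subst0 k (J : 'I_k) (p : {mpoly R[k]}) (m : 'X_{1..k}) :
  m J = 0%N -> (p \mPo subst0 J)@_m = p@_m.
Proof.
move=> mJ0.
have subst0X m' : 'X_[m'] \mPo subst0 J = (m' J == 0%N)%:R *: 'X_[m'].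
  rewrite comp_mpolyX mpolyXE_id (bigD1 J) //= [in RHS](bigD1 J) //=.
  rewrite tnth_mktuple eqxx; case: eqP => [->|/eqP m'J].
    rewrite !expr0 !mul1r scale1r; apply: eq_bigr => i ne_iJ.
    by rewrite tnth_mktuple (negbTE ne_iJ).
  by rewrite expr0n (negbTE m'J) mul0r scale0r.
rewrite [p in RHS]mpolyE comp_mpolyEX !raddf_sum /=; apply: eq_bigr => m' _.
rewrite subst0X !mcoeffZ mcoeffX.
by case: (eqVneq m' m) => [->|]; rewrite ?mJ0 ?mulr0 // eqxx !mulr1.
Qed.

Lemma msupp_subst0_ge2 k (J : 'I_k) (p : {mpoly R[k]}) (m : 'X_{1..k}) :
  p \mPo subst0 J = 0 -> p^`M(J) \mPo subst0 J = 0 ->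
  m \in msupp p -> (1 < m J)%N.
Proof.
move=> p0 dp0; rewrite mcoeff_msupp; case mJ: (m J) => [|[|e]] // /eqP[].
  by rewrite -(mcoeff_subst0 (J := J)) // p0 mcoeff0.
pose m0 := (m - U_(J))%MM.
have m0J : m0 J = 0%N by rewrite mnmBE mnm1E eqxx mJ.
have m0U : (m0 + U_(J))%MM = m.
  by apply: submK; apply/mnm_lepP => i; rewrite mnm1E; case: eqP => [<-|]; rewrite ?mJ.
have := mcoeff_mderiv J p m0.
by rewrite -(mcoeff_subst0 (J := J)) // dp0 mcoeff0 m0J m0U mulr1n.
Qed.

Lemma mpolyX_dvd k (p : {mpoly R[k]}) (V : 'X_{1..k}) :
  (forall m, m \in msupp p -> (V <= m)%MM) -> exists q, p = q * 'X_[V].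
Proof.
move=> Vle; exists (\sum_(m <- msupp p) p@_m *: 'X_[m - V]).
rewrite mulr_suml {1}[p]mpolyE; apply: eq_big_seq => m /Vle Vm.
by rewrite -scalerAl -mpolyXD submK.
Qed.

End MPolyComp.
Arguments subst0 {R k} J.

Lemma mulrn_mpoly_eq0 (R : numDomainType) k (p : {mpoly R[k]}) m :
  (p *+ m == 0) = (p == 0) || (m == 0%N).
Proof. by rewrite -mulr_natr -mpolyC_nat mulf_eq0 mpolyC_eq0 pnatr_eq0. Qed.

Section SymmetricDiagonal.
Variables (R : numDomainType) (n : nat) (p : {mpoly R[n]}) (S : pred 'I_n).
Hypothesis psym : p \is symmetric.
Hypothesis p_diag0 : forall l (F : n.-tuple {mpoly R[l]}) a,
  (forall i, S i -> tnth F i = a) -> p \mPo F = 0.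

Lemma sym_mderiv_diag0 (c : 'I_n) l (F : n.-tuple {mpoly R[l]}) a :
  S c -> (forall i, S i -> tnth F i = a) -> p^`M(c) \mPo F = 0.
Proof.
(* Replace the common value [a] by a fresh variable 'X_0, differentiate in it,
   and substitute [a] back. *)
move=> Sc FS.
pose shiftX := [tuple 'X_(lift ord0 j) | j < l] : l.-tuple {mpoly R[l.+1]}.
pose Fx := [tuple if S i then 'X_0 else tnth F i \mPo shiftX | i < n].
pose back := [tuple if unlift ord0 j is Some j' then 'X_j' else a | j < l.+1].
have dFx i : (tnth Fx i)^`M(0) = (S i)%:R.
  rewrite tnth_mktuple; case: (S i); first by rewrite mderivXU.
  rewrite mderiv_comp_mpoly big1 // => j _.
  by rewrite tnth_mktuple mderivXU eq_sym (negbTE (neq_lift _ _)) mulr0.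
have Fx_back i : tnth Fx i \mPo back = tnth F i.
  rewrite tnth_mktuple; case: ifP => [/FS ->|_].
    by rewrite comp_mpolyXU -tnth_nth tnth_mktuple unlift_none.
  rewrite comp_mpolyA -[RHS]comp_mpoly_id; apply: eq_comp_mpoly => j.
  by rewrite !tnth_mktuple comp_mpolyXU -tnth_nth tnth_mktuple liftK.
have sum0 : \sum_(i | S i) (p^`M(i) \mPo F) = 0.
  have pFx : p \mPo Fx = 0.
    by apply: (p_diag0 (a := 'X_0)) => i Si; rewrite tnth_mktuple Si.
  have := congr1 (fun q => q^`M(0) \mPo back) pFx.
  rewrite mderiv_comp_mpoly mderiv0 comp_mpoly0 raddf_sum /= => dsum0.
  rewrite -[RHS]dsum0 big_mkcond; apply: eq_bigr => i _.
  rewrite dFx mulr_natr raddfMn /= comp_mpolyA.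
  case: (S i); rewrite ?mulr0n // mulr1n.
  by apply: eq_comp_mpoly => j; rewrite tnth_mktuple Fx_back.
have cardS : #|S| != 0%N by rewrite -lt0n; apply/card_gt0P; exists c.
have : (p^`M(c) \mPo F) *+ #|S| = 0.
  rewrite -sumr_const -[RHS]sum0; apply: eq_bigr => i Si.
  by apply: sym_mderiv_comp_mpoly; rewrite ?FS.
by move/eqP; rewrite mulrn_mpoly_eq0 (negbTE cardS) orbF => /eqP.
Qed.

End SymmetricDiagonal.

Definition diag_shift n N k : n.-tuple {mpoly Cplx[k.+1]} :=
  [tuple if (i < N)%N then 'X_0 else 'X_0 + 'X_(inord (i - N).+1) | i < n].

Definition diag_unshift k : k.+1.-tuple {mpoly Cplx[k.+1]} :=
  [tuple if i == ord0 then 'X_0 else 'X_i - 'X_0 | i < k.+1].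

Lemma shift_index_eq n N (i : 'I_n) (j : 'I_(n - N)) : (N <= i)%N ->
  (inord (i - N).+1 == lift ord0 j :> 'I_(n - N).+1) = (i == N + j :> nat)%N.
Proof.
move=> Ni; rewrite -val_eqE /= inordK /bump /=; first by apply/eqP/eqP; lia.
by have := ltn_ord i; lia.
Qed.

Lemma diag_subst_shift n N (P : {mpoly Cplx[n]}) :
  P \mPo diag_subst n N (n - N) =
  (P \mPo diag_shift n N (n - N)) \mPo diag_unshift (n - N).
Proof.
rewrite comp_mpolyA; apply: eq_comp_mpoly => i; rewrite !tnth_mktuple.
case: ifP => iN; rewrite ?comp_mpolyD !comp_mpolyXU -!tnth_nth !tnth_mktuple //=.
rewrite -val_eqE /= inordK; last by have := ltn_ord i; move/negbT: iN; lia.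
by rewrite addrC subrK.
Qed.

Section DiagonalVanishing.
Variables (N n : nat) (P : {mpoly Cplx[n]}).
Hypothesis Psym : P \is symmetric.
Hypothesis P_diag0 : P \mPo diag_subst n N.+1 (n - N.+1) = 0.

Lemma diag_vanish (c : 'I_n) l (F : n.-tuple {mpoly Cplx[l]}) a :
  (N <= c)%N -> (forall i : 'I_n, (i < N)%N || (i == c) -> tnth F i = a) ->
  P \mPo F = 0.
Proof.
move=> Nc FS; have Nn : (N < n)%N := leq_ltn_trans Nc (ltn_ord c).
pose s := tperm (Ordinal Nn) c.
pose U := [tuple if j == 0%N :> nat then a else tnth F (s (insubd c (N + j)%N))
  | j < (n - N.+1).+1].
rewrite (sym_comp_mpoly_perm s) //.
transitivity ((P \mPo diag_subst n N.+1 (n - N.+1)) \mPo U); last first.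
  by rewrite P_diag0 comp_mpoly0.
rewrite comp_mpolyA; apply: eq_comp_mpoly => i; rewrite !tnth_mktuple.
case: ifP => iN; rewrite comp_mpolyXU -tnth_nth tnth_mktuple.
  apply: FS; rewrite /s; case: tpermP => [_|ic|ne_iN _]; rewrite ?eqxx ?orbT //.
    by apply/orP; right; apply/eqP/val_inj; move: iN; rewrite ic /=; lia.
  by apply/orP; left; move: ne_iN iN => /eqP; rewrite -val_eqE /=; lia.
rewrite inordK /=; last by have := ltn_ord i; move: iN; lia.
congr (tnth F (s _)); apply: val_inj; rewrite val_insubd.
by have := ltn_ord i; move: iN; case: ifP => /=; lia.
Qed.

Lemma diag_shift_msupp_ge2 (j : 'I_(n - N)) m :
  m \in msupp (P \mPo diag_shift n N (n - N)) -> (1 < m (lift ord0 j))%N.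
Proof.
set J := lift ord0 j; set T := diag_shift n N (n - N).
have ltc : (N + j < n)%N by have := ltn_ord j; lia.
pose c := Ordinal ltc.
have Nc : (N <= c)%N := leq_addr _ _.
pose F := [tuple tnth T i \mPo subst0 J | i < n].
have FS (i : 'I_n) : (i < N)%N || (i == c) -> tnth F i = 'X_0.
  rewrite !tnth_mktuple; case: ifP => [_ _|_ /= /eqP->].
    by rewrite comp_mpolyXU -tnth_nth tnth_mktuple (negbTE (neq_lift _ _)).
  rewrite comp_mpolyD !comp_mpolyXU -!tnth_nth !tnth_mktuple.
  by rewrite (negbTE (neq_lift _ _)) shift_index_eq // eqxx addr0.
have dT (i : 'I_n) : (tnth T i)^`M(J) = (i == c)%:R.
  rewrite tnth_mktuple -val_eqE /=; case: ifP => iN.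
    by rewrite mderivXU (negbTE (neq_lift _ _)); case: eqP => //; lia.
  by rewrite mderivD !mderivXU (negbTE (neq_lift _ _)) add0r shift_index_eq // leqNgt iN.
apply: (msupp_subst0_ge2 (J := J)).
  by rewrite comp_mpolyA (diag_vanish (c := c) (a := 'X_0)).
rewrite mderiv_comp_mpoly (bigD1 c) //= big1 => [|i ne_ic]; last first.
  by rewrite dT (negbTE ne_ic) mulr0.
rewrite dT eqxx mulr1 addr0 comp_mpolyA.
apply: (sym_mderiv_diag0 (S := [pred i : 'I_n | (i < N)%N || (i == c)]) Psym) FS.
- by move=> l G a; apply: diag_vanish.
- by rewrite /= eqxx orbT.
Qed.

End DiagonalVanishing.

Theorem proposition3 (N n : nat) (hN : (1 <= N)%N) (hNn : (N <= n)%N)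
  (P : {mpoly Cplx[n]}) (Psym : P \is symmetric)
  (Hvan : (N < n)%N ->
          P \mPo diag_subst n N.+1 (n - N.+1) = 0) :
  exists Q : {mpoly Cplx[(n - N).+1]},
    P \mPo diag_subst n N (n - N) =
      Q * \prod_(j < n - N) ('X_(lift ord0 j) - 'X_ord0) ^+ 2.
Proof.
have [ltNn|geNn] := ltnP N n; last first.
  exists (P \mPo diag_subst n N (n - N)).
  by rewrite big1 ?mulr1 // => j _; have := ltn_ord j; lia.
pose V := [multinom if i == ord0 then 0%N else 2%N | i < (n - N).+1].
have [q Pq] : exists q, P \mPo diag_shift n N (n - N) = q * 'X_[V].
  apply: mpolyX_dvd => m msupp_m; apply/mnm_lepP => i; rewrite mnmE.
  case: (unliftP ord0 i) => [j ->|->]; rewrite ?eqxx //.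
  exact: (diag_shift_msupp_ge2 Psym (Hvan ltNn)).
exists (q \mPo diag_unshift (n - N)).
rewrite diag_subst_shift Pq rmorphM /= comp_mpolyX big_ord_recl mnmE eqxx.
rewrite expr0 mul1r; congr (_ * _); apply: eq_bigr => j _.
by rewrite mnmE tnth_mktuple.
Qed.
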